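(* Assume the subexponential regime $a_T/T\to0$. Then the SVP predictor $\hat c_{\mathrm V}(x,\mathbb P,T)=c(x,\mathbb P)+\sqrt{\frac{2a_T}{T}\mathrm{Var}_{\mathbb P}(\ell(x,\xi))}$ satisfies the out-of-sample guarantee with speed $(a_T)$.
   Context: Setting: $\Sigma=\{1,\dots,d\}$ ($d\ge2$) is finite; $\mathcal P\subset\mathbb R^d$ is the probability simplex over $\Sigma$ and $\mathcal P^o$ its relative interior (all entries positive). $\mathcal X\subset\mathbb R^n$ is compact and $\ell:\mathcal X\times\Sigma\to\mathbb R$ is continuous in $x$ for each $i$. For $x\in\mathcal X$, $\mu\in\mathbb R^d$ let $c(x,\mu)=\sum_{i\in\Sigma}\ell(x,i)\mu(i)$, and $\mathrm{Var}_{\mathbb P}(\ell(x,\xi))=\sum_i\mathbb P(i)(\ell(x,i)-c(x,\mathbb P))^2$. Data $\xi_1,\xi_2,\dots$ are i.i.d. with law $\mathbb P\in\mathcal P$, $\mathbb P^\infty$ denotes their joint law, and $\hat{\mathbb P}_T(i)=\frac1T\sum_{t=1}^T\mathbf 1\{\xi_t=i\}$. $(a_T)_{T\ge1}$ is a sequence of positive reals with $a_T\to\infty$. Out-of-sample guarantee with speed $(a_T)$ for a predictor $\hat c$ (a sequence of functions $\hat c(\cdot,\cdot,T):\mathcal X\times\mathcal P\to\mathbb R$): for all $x\in\mathcal X$ and $\mathbb P\in\mathcal P^o$, $\limsup_{T\to\infty}\frac1{a_T}\log\mathbb P^\infty\big(c(x,\mathbb P)>\hat c(x,\hat{\mathbb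 P}_T,T)\big)\le-1$. *)

From HB Require Import structures.
From mathcomp Require Import all_boot all_order all_algebra.
From mathcomp Require Import all_classical all_reals all_analysis.
Set Implicit Arguments. Unset Strict Implicit. Unset Printing Implicit Defensive.
Import Order.TTheory GRing.Theory Num.Theory.
Import numFieldNormedType.Exports.
Local Open Scope ring_scope.

Section Defs.
Variables (R : realType) (d n : nat).
Implicit Types (x : 'rV[R]_n) (ell : 'rV[R]_n -> 'I_d -> R) (mu : 'I_d -> R).

Definition simplex (mu : 'I_d -> R) : Prop :=
  (forall i, 0 <= mu i) /\ \sum_i mu i = 1.
Definition simplex_int (mu : 'I_d -> R) : Prop :=
  (forall i, 0 < mu i) /\ \sum_i mu i = 1.

Definition cost ell x mu : R := \sum_i ell x i * mu i.

Definition variance ell x mu : R :=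
  \sum_i mu i * (ell x i - cost ell x mu) ^+ 2.

Definition svp (a : nat -> R) ell x mu (T : nat) : R :=
  cost ell x mu + Num.sqrt (2 * a T / T%:R * variance ell x mu).

Definition empirical (T : nat) (xi : {ffun 'I_T -> 'I_d}) : 'I_d -> R :=
  fun i => (#|[set t | xi t == i]|)%:R / T%:R.

(* P^infty(E) for an event E depending only on (xi_1,...,xi_T):
   the i.i.d. product law of the first T coordinates. *)
Definition iid_prob (P : 'I_d -> R) (T : nat) (E : {ffun 'I_T -> 'I_d} -> bool) : R :=
  \sum_(xi : {ffun 'I_T -> 'I_d} | E xi) \prod_(t < T) P (xi t).

End Defs.

Definition elog (R : realType) (p : R) : \bar R :=
  if p <= 0 then -oo%E else (ln p)%:E.

(* Write g := c(x, P) - ell(x, .), centred with variance v under P.  The SVP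
   bound fails iff the empirical mean D of g exceeds sqrt (2 a_T / T * Var_emp),
   and Var_emp = W - D^2 with W the empirical second moment of g.  Either W and
   D are within a fixed distance of v and 0, and then D exceeds
   sqrt (2 a_T / T * (1 - δ) v): by Chernoff's bound at the Gaussian scale,
   which is legitimate because a_T / T -> 0, this has probability at most
   exp (- a_T (1 - δ)^2).  Or one of W, D, -D deviates by a fixed amount, which
   has probability exp (- c T) <= exp (- a_T).  Hence the violation probability
   is at most 4 exp (- (1 - ε) a_T) eventually, for every ε > 0. *)

From Pilot Require Import Defs.
From HB Require Import structures.
From mathcomp Require Import all_boot all_order all_algebra.
From mathcomp Require Import all_classical all_reals all_analysis.
From mathcomp Require Import ring lra.
Set Implicit Arguments. Unset Strict Implicit. Unset Printing Implicit Defensive.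
Import Order.TTheory GRing.Theory Num.Theory.
Import numFieldNormedType.Exports.
Local Open Scope ring_scope.

Section exp_bounds.
Variable R : realType.
Implicit Types u B : R.

Lemma expR_le_1Dx_sqr_npos u : u <= 0 -> expR u <= 1 + u + u ^+ 2 / 2.
Proof.
move=> u_le0.
pose f : R -> R := cst 1 + id + 2^-1 \*: (id * id) - expR.
have f_derive (y : R) : is_derive y 1 f (1 + y - expR y).
  have f' := is_deriveB (is_deriveD (is_deriveD (is_derive_cst (1 : R) y 1)
    (is_derive_id y 1)) (is_deriveZ 2^-1 (is_deriveM (is_derive_id y 1)
    (is_derive_id y 1)))) (is_derive_expR y).
  apply: (is_derive_eq f').
  by rewrite /GRing.scale /=; field.
have fE (y : R) : f y = 1 + y + 2^-1 * y ^+ 2 - expR y by rewrite expr2.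
have [|c _ fD] := @MVT_segment R f _ u 0 u_le0 (fun y _ => f_derive y).
  apply: continuous_subspaceT => y.
  by apply/differentiable_continuous/derivable1_diffP; case: (f_derive y).
have : (1 + c - expR c) * (0 - u) <= 0.
  by rewrite mulr_le0_ge0 ?subr_le0 ?expR_ge1Dx // sub0r oppr_ge0.
rewrite -fD !fE expR0 expr0n /=; lra.
Qed.

Lemma expR_le_1Dx_sqr_nneg u : 0 <= u -> expR u <= 1 + u + u ^+ 2 / 2 * expR u.
Proof.
move=> u_ge0.
pose f : R -> R := cst 1 + id + (2^-1 \*: (id * id)) * expR - expR.
have f_derive (y : R) : is_derive y 1 f (1 - expR y * (1 - y - y ^+ 2 / 2)).
  have f' := is_deriveB (is_deriveD (is_deriveD (is_derive_cst (1 : R) y 1)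
    (is_derive_id y 1)) (is_deriveM (is_deriveZ 2^-1 (is_deriveM (is_derive_id y 1)
    (is_derive_id y 1))) (is_derive_expR y))) (is_derive_expR y).
  apply: (is_derive_eq f').
  by rewrite !fctE /GRing.scale /= /GRing.scale /= expr2; field.
have fE (y : R) : f y = 1 + y + 2^-1 * y ^+ 2 * expR y - expR y by rewrite expr2.
have [|c _ fD] := @MVT_segment R f _ 0 u u_ge0 (fun y _ => f_derive y).
  apply: continuous_subspaceT => y.
  by apply/differentiable_continuous/derivable1_diffP; case: (f_derive y).
have f'_ge0 : 0 <= 1 - expR c * (1 - c - c ^+ 2 / 2).
  rewrite subr_ge0 -[leRHS](expRxMexpNx_1 c) ler_wpM2l ?expR_ge0 //.
  by apply: le_trans (expR_ge1Dx _); have := sqr_ge0 c; lra.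
have : 0 <= (1 - expR c * (1 - c - c ^+ 2 / 2)) * (u - 0) by rewrite mulr_ge0 ?subr0.
rewrite -fD !fE expR0 expr0n /=; lra.
Qed.

Lemma expR_le_1Dx_sqr u B : `|u| <= B -> expR u <= 1 + u + u ^+ 2 / 2 * expR B.
Proof.
move=> uB; have B_ge0 : 0 <= B := le_trans (normr_ge0 u) uB.
have u2_ge0 : 0 <= u ^+ 2 / 2 by rewrite divr_ge0 ?sqr_ge0.
have [u_le0|u_gt0] := lerP u 0.
  apply: le_trans (expR_le_1Dx_sqr_npos u_le0) _.
  by rewrite lerD2l ler_peMr // -expR0 ler_expR.
apply: le_trans (expR_le_1Dx_sqr_nneg (ltW u_gt0)) _.
by rewrite lerD2l ler_wpM2l // ler_expR (le_trans (ler_norm u)).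
Qed.

Lemma expR_le_1D2x u : 0 <= u <= 2^-1 -> expR u <= 1 + 2 * u.
Proof.
case/andP=> u_ge0 u_le; have := expR_le_1Dx_sqr_nneg u_ge0.
have : expR u * (1 - u) <= 1.
  by rewrite -[leRHS](expRxMexpNx_1 u) ler_wpM2l ?expR_ge0 // expR_ge1Dx.
have := expR_gt0 u; nra.
Qed.

End exp_bounds.

Lemma sum_ffun_prod (R : comPzSemiRingType) (I J : finType) (F : J -> R) :
  \sum_(f : {ffun I -> J}) \prod_(i : I) F (f i) = (\sum_j F j) ^+ #|I|.
Proof.
by rewrite -(bigA_distr_bigA (fun (i : I) (j : J) => F j)) prodr_const.
Qed.

Definition sample_mean_ge (R : numDomainType) (d T : nat) (f : 'I_d -> R) (t : R) :
  pred {ffun 'I_T -> 'I_d} := fun xi => T%:R * t <= \sum_(s < T) f (xi s).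
Arguments sample_mean_ge {R d} T f t.

Section iid_prob.
Variables (R : realType) (d : nat) (P : 'I_d -> R).
Hypothesis P_ge0 : forall i, 0 <= P i.
Implicit Types (T : nat) (g : 'I_d -> R).

Lemma le_iid_probU T (E E1 E2 : {ffun 'I_T -> 'I_d} -> bool) :
  (forall xi, E xi -> E1 xi || E2 xi) ->
  iid_prob P E <= iid_prob P E1 + iid_prob P E2.
Proof.
move=> E_sub; rewrite /iid_prob (big_mkcond E) (big_mkcond E1) (big_mkcond E2).
rewrite -big_split /=.
apply: ler_sum => xi _; have w_ge0 : 0 <= \prod_(t < T) P (xi t) by apply: prodr_ge0.
case: ifP => [/E_sub|_]; last by rewrite addr_ge0 //; case: ifP.
by case/orP => ->; case: ifP; rewrite ?addr0 ?add0r ?lerDl ?lerDr.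
Qed.

Lemma le_iid_prob_sum T (E : {ffun 'I_T -> 'I_d} -> bool) Es :
  (forall xi, E xi -> has (fun F => F xi) Es) ->
  iid_prob P E <= \sum_(F <- Es) iid_prob P F.
Proof.
elim: Es E => [|F Es IH] E E_sub.
  by rewrite big_nil /iid_prob big_pred0 // => xi; apply/negP => /E_sub.
rewrite big_cons; apply: le_trans (le_iid_probU (E1 := F) E_sub) _.
by rewrite lerD2l; apply: IH.
Qed.

(* Chernoff's bound: Markov's inequality for [expR (l * sum)], whose
   expectation factorizes over the independent coordinates. *)
Lemma iid_prob_mean_ge_le_mgf T g (t l : R) : 0 <= l ->
  iid_prob P (sample_mean_ge T g t) <=
  expR (- (l * (T%:R * t))) * (\sum_i P i * expR (l * g i)) ^+ T.
Proof.
move=> l_ge0; pose w (xi : {ffun 'I_T -> 'I_d}) := \prod_(s < T) P (xi s).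
have w_ge0 xi : 0 <= w xi by apply: prodr_ge0.
have -> : expR (- (l * (T%:R * t))) * (\sum_i P i * expR (l * g i)) ^+ T =
    \sum_xi w xi * expR (l * (\sum_(s < T) g (xi s) - T%:R * t)).
  rewrite -[X in _ ^+ X](card_ord T) -sum_ffun_prod mulr_sumr.
  apply: eq_bigr => xi _; rewrite mulrBr expRD big_split /= -expR_sum mulr_sumr /w; ring.
rewrite /iid_prob [leRHS](bigID (sample_mean_ge T g t)) /= ler_wpDr ?sumr_ge0 //.
  by move=> xi _; rewrite mulr_ge0 ?expR_ge0.
apply: ler_sum => xi tail; rewrite -/(w xi) ler_peMr // -[X in X <= _]expR0 ler_expR.
by rewrite mulr_ge0 // subr_ge0.
Qed.

Hypothesis P_sum1 : \sum_i P i = 1.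

Lemma mgf_le g (B l : R) : \sum_i P i * g i = 0 -> (forall i, `|g i| <= B) -> 0 <= l ->
  \sum_i P i * expR (l * g i) <= 1 + l ^+ 2 / 2 * expR (l * B) * \sum_i P i * g i ^+ 2.
Proof.
move=> g_mean0 g_le l_ge0.
have <- : \sum_i P i * (1 + l * g i + (l * g i) ^+ 2 / 2 * expR (l * B)) =
    1 + l ^+ 2 / 2 * expR (l * B) * \sum_i P i * g i ^+ 2.
  have sum_lin : \sum_i P i * (l * g i) = 0.
    by rewrite -[RHS](mulr0 l) -[in RHS]g_mean0 mulr_sumr; apply: eq_bigr => i _; ring.
  have sum_quad : \sum_i P i * ((l * g i) ^+ 2 / 2 * expR (l * B)) =
      l ^+ 2 / 2 * expR (l * B) * \sum_i P i * g i ^+ 2.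
    by rewrite mulr_sumr; apply: eq_bigr => i _; ring.
  under eq_bigr do rewrite !mulrDr mulr1.
  by rewrite !big_split /= P_sum1 sum_lin sum_quad addr0.
apply: ler_sum => i _; rewrite ler_wpM2l // expR_le_1Dx_sqr //.
by rewrite normrM ger0_norm // ler_wpM2l.
Qed.

Lemma iid_prob_mean_ge_le T g (B t l : R) :
  \sum_i P i * g i = 0 -> (forall i, `|g i| <= B) -> 0 <= l ->
  iid_prob P (sample_mean_ge T g t) <=
  expR (T%:R * (l ^+ 2 / 2 * expR (l * B) * (\sum_i P i * g i ^+ 2) - l * t)).
Proof.
move=> g_mean0 g_le l_ge0; apply: le_trans (iid_prob_mean_ge_le_mgf T g t l_ge0) _.
set v := \sum_i P i * g i ^+ 2.
have mgf_ge0 : 0 <= \sum_i P i * expR (l * g i).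
  by apply: sumr_ge0 => i _; rewrite mulr_ge0 ?expR_ge0.
have mgf_le_expR : \sum_i P i * expR (l * g i) <= expR (l ^+ 2 / 2 * expR (l * B) * v).
  exact: le_trans (mgf_le g_mean0 g_le l_ge0) (expR_ge1Dx _).
rewrite mulrBr expRD mulrC mulrCA ler_wpM2r ?expR_ge0 // expRM_natl.
by rewrite lerXn2r // nnegrE expR_ge0.
Qed.

Lemma iid_prob_mean_ge_exp_decay g (t : R) : \sum_i P i * g i = 0 -> 0 < t ->
  exists2 c, 0 < c & forall T, iid_prob P (sample_mean_ge T g t) <= expR (- (T%:R * c)).
Proof.
move=> g_mean0 t_gt0; set B := \sum_j `|g j|; set v := \sum_i P i * g i ^+ 2.
have g_le i : `|g i| <= B by rewrite /B (bigD1 i) //= lerDl sumr_ge0.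
have B_ge0 : 0 <= B by rewrite sumr_ge0.
have v_ge0 : 0 <= v by rewrite sumr_ge0 // => i _; rewrite mulr_ge0 ?sqr_ge0.
(* [l] is chosen so that [l * B <= 1/2] and [l * v <= t/2]. *)
set D := 2 * (B * t + v) + t; set l := t / D.
have D_gt0 : 0 < D by rewrite /D ltr_wpDl // mulr_ge0 // addr_ge0 // mulr_ge0 // ltW.
have l_gt0 : 0 < l by rewrite divr_gt0.
have tBt_ge0 : 0 <= t * (B * t) by rewrite !mulr_ge0 // ltW.
have tt_ge0 : 0 <= t * t by rewrite mulr_ge0 // ltW.
have lB_le : l * B <= 2^-1 by rewrite /l mulrAC ler_pdivrMr // /D; lra.
have lv_le : l * v <= t / 2 by rewrite /l mulrAC ler_pdivrMr // /D; lra.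
exists (l * t / 2) => [|T]; first exact: divr_gt0 (mulr_gt0 l_gt0 t_gt0) _.
apply: le_trans (iid_prob_mean_ge_le T t g_mean0 g_le (ltW l_gt0)) _.
rewrite ler_expR -[leRHS]mulrN ler_wpM2l // -/v.
have l_ge0 := ltW l_gt0.
have e_le2 : expR (l * B) <= 2.
  apply: le_trans (expR_le_1D2x (u := l * B) _) _; last by lra.
  by rewrite mulr_ge0 ?lB_le.
have : 0 <= (2 - expR (l * B)) * (l * (l * v)).
  by apply: mulr_ge0; [rewrite subr_ge0 | apply/mulr_ge0/mulr_ge0].
have : 0 <= l * (t / 2 - l * v) by apply: mulr_ge0; rewrite ?subr_ge0.
lra.
Qed.

(* Chernoff's bound with the optimal [l = sqrt (K / v)] of the Gaussian
   approximation, valid as long as [l * B] is small. *)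
Lemma iid_prob_mean_ge_sqrt_le T g (B K δ : R) :
  \sum_i P i * g i = 0 -> (forall i, `|g i| <= B) -> 0 < \sum_i P i * g i ^+ 2 ->
  0 <= K -> 0 <= δ <= 1 -> K * B ^+ 2 <= δ ^+ 2 * (\sum_i P i * g i ^+ 2) / 4 ->
  iid_prob P (sample_mean_ge T g (Num.sqrt (K * \sum_i P i * g i ^+ 2))) <=
  expR (- (T%:R * K * (1 - δ) / 2)).
Proof.
set v := \sum_i P i * g i ^+ 2 => g_mean0 g_le v_gt0 K_ge0 /andP[δ_ge0 δ_le1] KB_le.
set s := Num.sqrt (K * v); set l := s / v.
have s2 : s ^+ 2 = K * v by rewrite sqr_sqrtr // mulr_ge0 // ltW.
have v_neq0 : v != 0 by rewrite gt_eqF.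
have l2v : l ^+ 2 * v = K by rewrite expr_div_n s2; field.
have ls : l * s = K by rewrite mulrAC -expr2 s2 mulfK.
have l_ge0 : 0 <= l by rewrite divr_ge0 ?sqrtr_ge0 // ltW.
have B_ge0 : 0 <= B.
  move: v_gt0; rewrite /v; have [i _|no_i] := pickP (fun i : 'I_d => true).
    by move=> _; exact: le_trans (normr_ge0 (g i)) (g_le i).
  by rewrite big_pred0 ?ltxx.
have lB_le : l * B <= δ / 2.
  rewrite -ler_sqr ?nnegrE ?(mulr_ge0 l_ge0 B_ge0) ?divr_ge0 //.
  rewrite -(ler_pM2r v_gt0) exprMn mulrAC l2v.
  by rewrite (_ : (δ / 2) ^+ 2 * v = δ ^+ 2 * v / 4) //; field.
have elB_le : expR (l * B) <= 1 + δ.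
  apply: le_trans (expR_le_1D2x (u := l * B) _) _.
    by rewrite (mulr_ge0 l_ge0 B_ge0) /=; lra.
  lra.
apply: le_trans (iid_prob_mean_ge_le T s g_mean0 g_le l_ge0) _.
rewrite ler_expR -/v ls (_ : l ^+ 2 / 2 * _ * v = l ^+ 2 * v * (expR (l * B) / 2)).
  rewrite l2v; have : 0 <= T%:R * K * (1 + δ - expR (l * B)).
    by rewrite mulr_ge0 ?mulr_ge0 ?subr_ge0.
  lra.
by ring.
Qed.

End iid_prob.

Section empirical.
Variables (R : realType) (d : nat).

Lemma empirical_sum_mul T (xi : {ffun 'I_T -> 'I_d}) (f : 'I_d -> R) :
  \sum_i empirical R xi i * f i = (\sum_(s < T) f (xi s)) / T%:R.
Proof.
rewrite (partition_big xi xpredT) //= mulr_suml; apply: eq_bigr => i _.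
rewrite (eq_bigr (fun => f i)) => [|s /eqP ->//]; rewrite sumr_const.
rewrite (eq_card (B := [set t | xi t == i])) => [|s]; last by rewrite inE.
by rewrite /empirical mulrAC mulr_natl.
Qed.

Lemma empirical_sum1 T (xi : {ffun 'I_T -> 'I_d}) : (0 < T)%N ->
  \sum_i empirical R xi i = 1 :> R.
Proof.
move=> T_gt0; under eq_bigr do rewrite -[empirical R _ _]mulr1.
by rewrite empirical_sum_mul sumr_const card_ord divff // pnatr_eq0 -lt0n.
Qed.

End empirical.

Lemma sqrt_sub_sqr_lt_cases (R : rcfType) (k v δ W D : R) :
  0 <= k -> 0 <= v -> 0 <= δ -> Num.sqrt (k * (W - D ^+ 2)) < D ->
  [\/ Num.sqrt (k * (1 - δ) * v) <= D, v * δ / 2 <= v - W,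
      Num.sqrt (v * δ / 2) <= D | Num.sqrt (v * δ / 2) <= - D].
Proof.
move=> k_ge0 v_ge0 δ_ge0 sqrt_lt.
set r := Num.sqrt (v * δ / 2).
have r_ge0 : 0 <= r := sqrtr_ge0 _.
have r2 : r ^+ 2 = v * δ / 2 by rewrite sqr_sqrtr // !mulr_ge0.
have [|W_gt] := lerP (v * δ / 2) (v - W); first by constructor 2.
have [|D_lt] := lerP r D; first by constructor 3.
have [|ND_lt] := lerP r (- D); first by constructor 4.
constructor 1; apply: le_trans (ltW sqrt_lt); apply: ler_wsqrtr.
rewrite mulrAC -mulrA ler_wpM2l //.
have : D ^+ 2 < r ^+ 2 by nra.
lra.
Qed.

Section cost.
Variables (R : realType) (d n : nat) (ell : 'rV[R]_n -> 'I_d -> R) (x : 'rV[R]_n).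
Variable mu : 'I_d -> R.
Hypothesis mu_sum1 : \sum_i mu i = 1.

Lemma sum_mul_sub_cost (c : R) : \sum_i mu i * (c - ell x i) = c - cost ell x mu.
Proof.
under eq_bigr do rewrite mulrBr.
by rewrite big_split /= -mulr_suml mu_sum1 mul1r sumrN; under eq_bigr do rewrite mulrC.
Qed.

Lemma variance_sub_cost (c : R) :
  Defs.variance ell x mu = \sum_i mu i * (c - ell x i) ^+ 2 - (c - cost ell x mu) ^+ 2.
Proof.
rewrite /Defs.variance; set D := c - cost ell x mu.
transitivity (\sum_i (mu i * (c - ell x i) ^+ 2 - 2 * D * (mu i * (c - ell x i))
  + D ^+ 2 * mu i)); first by apply: eq_bigr => i _; rewrite /D; ring.
by rewrite !big_split /= sumrN -!mulr_sumr sum_mul_sub_cost mu_sum1 -/D; ring.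
Qed.

Lemma variance_ge0 : (forall i, 0 <= mu i) -> 0 <= Defs.variance ell x mu.
Proof. by move=> mu_ge0; rewrite sumr_ge0 // => i _; rewrite mulr_ge0 ?sqr_ge0. Qed.

End cost.

Section asymptotics.
Variable R : realType.
Local Open Scope classical_set_scope.
Implicit Types (a p : nat -> R).

Lemma near_expR_rate_le a (c : R) : (fun T => a T / T%:R) @ \oo --> 0 -> 0 < c ->
  \forall T \near \oo, expR (- (T%:R * c)) <= expR (- a T).
Proof.
move=> a_sub c_gt0; near=> T.
have T_gt0 : 0 < T%:R :> R by rewrite ltr0n; near: T; exact: nbhs_infty_gt.
rewrite ler_expR lerN2 -ler_pdivrMl // mulrC.
by near: T; exact: cvgr_le a_sub _ c_gt0.
Unshelve. all: end_near. Qed.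

Lemma limn_esup_le_near (u : nat -> \bar R) (c : \bar R) :
  (\forall n \near \oo, u n <= c)%E -> (limn_esup u <= c)%E.
Proof.
move=> u_le; apply: le_trans (ereal_inf_lbound _) _; first by exists [set n | u n <= c]%E.
by apply: ge_ereal_sup => _ [n /= ? <-].
Qed.

Lemma limn_esup_elog_le p a (C b : R) : 0 < C -> a @ \oo --> +oo ->
  (\forall T \near \oo, p T <= C * expR (- (b * a T))) ->
  (limn_esup (fun T => elog (p T) * ((a T)^-1)%:E) <= (- b)%:E)%E.
Proof.
move=> C_gt0 a_oo p_le; apply/lee_addgt0Pr => e e_gt0.
apply: limn_esup_le_near; near=> T.
have aT_gt0 : 0 < a T by near: T; exact: (cvgryPgt _).1 a_oo _.
have lnC_le : ln C <= e * a T.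
  by rewrite -ler_pdivrMl //; near: T; exact: (cvgryPge _).1 a_oo _.
rewrite /elog; case: ifPn => [_|]; first by rewrite gt0_mulNye ?lte_fin ?invr_gt0 ?leNye.
rewrite -ltNge => pT_gt0; rewrite -EFinM -EFinD lee_fin ler_pdivrMr //.
have : ln (p T) <= ln (C * expR (- (b * a T))).
  by rewrite ler_ln ?posrE ?mulr_gt0 ?expR_gt0 //; near: T.
rewrite lnM ?posrE ?expR_gt0 // expRK.
lra.
Unshelve. all: end_near. Qed.

Lemma near_iid_prob_mean_ge_le (d : nat) (P : 'I_d -> R) a (f : 'I_d -> R) (t : R) :
  (forall i, 0 <= P i) -> \sum_i P i = 1 -> \sum_i P i * f i = 0 -> 0 < t ->
  (fun T => a T / T%:R) @ \oo --> 0 ->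
  \forall T \near \oo, iid_prob P (sample_mean_ge T f t) <= expR (- a T).
Proof.
move=> P_ge0 P_sum1 f_mean0 t_gt0 a_sub.
have [c c_gt0 dev_f] := iid_prob_mean_ge_exp_decay P_ge0 P_sum1 f_mean0 t_gt0.
by apply: filterS (near_expR_rate_le a_sub c_gt0) => T; apply: le_trans (dev_f T).
Qed.

End asymptotics.

Section svp.
Variables (R : realType) (d n : nat) (ell : 'rV[R]_n -> 'I_d -> R) (x : 'rV[R]_n).
Variables (P : 'I_d -> R) (a : nat -> R).
Hypotheses (P_ge0 : forall i, 0 <= P i) (P_sum1 : \sum_i P i = 1).

Let m := cost ell x P.
Let v := Defs.variance ell x P.
Let g i := m - ell x i.
Let h i := v - g i ^+ 2.

Lemma sum_mul_dev_eq0 : \sum_i P i * g i = 0.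
Proof. by rewrite sum_mul_sub_cost // subrr. Qed.

Lemma sum_mul_Ndev_eq0 : \sum_i P i * - g i = 0.
Proof.
rewrite -[RHS]oppr0 -[in RHS]sum_mul_dev_eq0 -sumrN.
by apply: eq_bigr => i _; rewrite mulrN.
Qed.

Lemma sum_mul_dev_sqr : \sum_i P i * g i ^+ 2 = v.
Proof. by rewrite /v (variance_sub_cost _ _ P_sum1 m) subrr expr0n subr0. Qed.

Lemma sum_mul_var_sub_dev_sqr : \sum_i P i * h i = 0.
Proof.
transitivity (v * \sum_i P i - \sum_i P i * g i ^+ 2).
  by rewrite mulr_sumr -sumrB; apply: eq_bigr => i _; rewrite /h; ring.
by rewrite P_sum1 mulr1 sum_mul_dev_sqr subrr.
Qed.

(* A violation reads [sqrt (k * (W - D ^+ 2)) < D] for the empirical first and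
   second moments [D], [W] of [g], whence the four cases. *)
Lemma svp_violation_cases T (xi : {ffun 'I_T -> 'I_d}) (δ : R) :
  (0 < T)%N -> 0 <= a T -> 0 <= δ -> svp a ell x (empirical R xi) T < m ->
  [\/ sample_mean_ge T g (Num.sqrt (2 * a T / T%:R * (1 - δ) * v)) xi,
      sample_mean_ge T h (v * δ / 2) xi,
      sample_mean_ge T g (Num.sqrt (v * δ / 2)) xi |
      sample_mean_ge T (fun i => - g i) (Num.sqrt (v * δ / 2)) xi].
Proof.
move=> T_gt0 aT_ge0 δ_ge0; set mu := empirical R xi.
have mu_sum1 : \sum_i mu i = 1 := empirical_sum1 R xi T_gt0.
have T_gt0' : 0 < T%:R :> R by rewrite ltr0n.
have sample_mean f t : sample_mean_ge T f t xi = (t <= \sum_i mu i * f i).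
  by rewrite /sample_mean_ge empirical_sum_mul ler_pdivlMr // mulrC.
have cost_mu : cost ell x mu = m - \sum_i mu i * g i.
  by rewrite sum_mul_sub_cost ?subKr.
have var_mu : Defs.variance ell x mu =
    \sum_i mu i * g i ^+ 2 - (\sum_i mu i * g i) ^+ 2.
  by rewrite (variance_sub_cost _ _ mu_sum1 m) sum_mul_sub_cost.
have sum_h : \sum_i mu i * h i = v - \sum_i mu i * g i ^+ 2.
  rewrite -[v in RHS]mul1r -mu_sum1 mulr_suml -sumrB.
  by apply: eq_bigr => i _; rewrite /h; ring.
have sum_Ng : \sum_i mu i * - g i = - \sum_i mu i * g i.
  by rewrite -sumrN; apply: eq_bigr => i _; rewrite mulrN.
rewrite /svp var_mu cost_mu !sample_mean sum_h sum_Ng => svp_lt.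
apply: sqrt_sub_sqr_lt_cases => //; first by rewrite !mulr_ge0.
- exact: variance_ge0.
- by rewrite -(ltrD2l (m - \sum_i mu i * g i)) subrK.
Qed.

Lemma iid_prob_svp_violation_eq0 T : (0 < T)%N -> (forall i, 0 < P i) -> v = 0 ->
  iid_prob P (fun xi : {ffun 'I_T -> 'I_d} => svp a ell x (empirical R xi) T < m) = 0.
Proof.
move=> T_gt0 P_gt0 v_eq0; have g_eq0 i : g i = 0.
  have v_sum : \sum_i P i * g i ^+ 2 = 0 by rewrite sum_mul_dev_sqr.
  have /(_ i isT)/eqP := psumr_eq0P (fun j _ => mulr_ge0 (P_ge0 j) (sqr_ge0 (g j))) v_sum.
  by rewrite mulf_eq0 sqrf_eq0 gt_eqF //= => /eqP.
rewrite /iid_prob big_pred0 // => xi; apply/negbTE; rewrite -leNgt /svp.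
have cost_mu : cost ell x (empirical R xi) = m.
  apply/eqP; rewrite eq_sym -subr_eq0 -(sum_mul_sub_cost _ _ (empirical_sum1 R xi T_gt0)).
  by rewrite big1 // => i _; rewrite -/(g i) g_eq0 mulr0.
by rewrite cost_mu lerDl sqrtr_ge0.
Qed.

Local Open Scope classical_set_scope.

Lemma near_iid_prob_svp_mean_dev_le (δ : R) : (forall T, (0 < T)%N -> 0 < a T) ->
  (fun T => a T / T%:R) @ \oo --> 0 -> 0 < v -> 0 < δ <= 1 ->
  \forall T \near \oo,
    iid_prob P (sample_mean_ge T g (Num.sqrt (2 * a T / T%:R * (1 - δ) * v))) <=
    expR (- (a T * (1 - δ) ^+ 2)).
Proof.
move=> a_gt0 a_sub v_gt0 /andP[δ_gt0 δ_le1].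
set B := \sum_i `|g i|.
have g_le i : `|g i| <= B by rewrite /B (bigD1 i) //= lerDl sumr_ge0.
have B2_ge0 : 0 <= B ^+ 2 := sqr_ge0 B.
set θ := δ ^+ 2 * v / (8 * (B ^+ 2 + 1)).
have θ_gt0 : 0 < θ by rewrite divr_gt0 ?mulr_gt0 ?exprn_gt0 // ltr_wpDl.
have θ_eq : θ * (8 * (B ^+ 2 + 1)) = δ ^+ 2 * v.
  by rewrite mulfVK // gt_eqF // mulr_gt0 // ltr_wpDl.
near=> T.
have T_gt0 : (0 < T)%N by near: T; exact: nbhs_infty_gt.
have aT_gt0 := a_gt0 T T_gt0.
have q_le : a T / T%:R <= θ by near: T; exact: cvgr_le a_sub _ θ_gt0.
have q_ge0 : 0 <= a T / T%:R by rewrite divr_ge0 // ltW.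
set K := 2 * a T / T%:R * (1 - δ).
have K_ge0 : 0 <= K by rewrite /K -mulrA; apply/mulr_ge0/mulr_ge0 => //; lra.
(* [K <= 2 * θ] and [2 * θ * (B ^+ 2 + 1) = δ ^+ 2 * v / 4]. *)
have KB_le : K * B ^+ 2 <= δ ^+ 2 * v / 4.
  have := mulr_ge0 (mulr_ge0 q_ge0 B2_ge0) (ltW δ_gt0).
  have : 0 <= (θ - a T / T%:R) * B ^+ 2 by rewrite mulr_ge0 ?subr_ge0.
  rewrite /K -[2 * a T / T%:R]mulrA; lra.
have δ_01 : 0 <= δ <= 1 by rewrite ltW.
have := iid_prob_mean_ge_sqrt_le P_ge0 P_sum1 T sum_mul_dev_eq0 g_le.
rewrite sum_mul_dev_sqr => /(_ _ _ v_gt0 K_ge0 δ_01 KB_le).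
by rewrite /K; congr (_ <= expR _); field; rewrite pnatr_eq0 -lt0n.
Unshelve. all: end_near. Qed.

Lemma near_iid_prob_svp_violation_le (ε : R) : (forall i, 0 < P i) ->
  (forall T, (0 < T)%N -> 0 < a T) -> (fun T => a T / T%:R) @ \oo --> 0 -> 0 < ε < 1 ->
  \forall T \near \oo, iid_prob P (fun xi : {ffun 'I_T -> 'I_d} =>
    svp a ell x (empirical R xi) T < m) <= 4 * expR (- ((1 - ε) * a T)).
Proof.
move=> P_gt0 a_gt0 a_sub /andP[ε_gt0 ε_lt1].
have [v_eq0|v_neq0] := eqVneq v 0.
  near=> T; rewrite iid_prob_svp_violation_eq0 ?mulr_ge0 ?expR_ge0 //.
  by near: T; exact: nbhs_infty_gt.
have v_gt0 : 0 < v by rewrite lt_neqAle eq_sym v_neq0 variance_ge0.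
set δ := ε / 2; set r := Num.sqrt (v * δ / 2).
have δ_gt0 : 0 < δ by rewrite divr_gt0.
have r_gt0 : 0 < r by rewrite sqrtr_gt0 !divr_gt0 ?mulr_gt0.
have vδ_gt0 : 0 < v * δ / 2 by rewrite !divr_gt0 ?mulr_gt0.
near=> T; have T_gt0 : (0 < T)%N by near: T; exact: nbhs_infty_gt.
have aT_gt0 := a_gt0 T T_gt0.
have p1_le : iid_prob P (sample_mean_ge T g (Num.sqrt (2 * a T / T%:R * (1 - δ) * v))) <=
    expR (- (a T * (1 - δ) ^+ 2)).
  by near: T; apply: near_iid_prob_svp_mean_dev_le => //; rewrite δ_gt0 /δ /=; lra.
have p2_le : iid_prob P (sample_mean_ge T h (v * δ / 2)) <= expR (- a T).
  by near: T; exact: near_iid_prob_mean_ge_le sum_mul_var_sub_dev_sqr vδ_gt0 a_sub.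
have p3_le : iid_prob P (sample_mean_ge T g r) <= expR (- a T).
  by near: T; exact: near_iid_prob_mean_ge_le sum_mul_dev_eq0 r_gt0 a_sub.
have p4_le : iid_prob P (sample_mean_ge T (fun i => - g i) r) <= expR (- a T).
  by near: T; exact: near_iid_prob_mean_ge_le sum_mul_Ndev_eq0 r_gt0 a_sub.
set s := Num.sqrt (2 * a T / T%:R * (1 - δ) * v) in p1_le *.
have aT_le : expR (- a T) <= expR (- ((1 - ε) * a T)).
  by rewrite ler_expR lerN2 ler_piMl ?ltW //; lra.
have mean_dev_le : expR (- (a T * (1 - δ) ^+ 2)) <= expR (- ((1 - ε) * a T)).
  by rewrite ler_expR lerN2 mulrC ler_wpM2l ?ltW // expr2 /δ; nra.
apply: le_trans (le_iid_prob_sum P_ge0 (Es := [:: sample_mean_ge T g s;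
  sample_mean_ge T h (v * δ / 2); sample_mean_ge T g r;
  sample_mean_ge T (fun i => - g i) r]) _) _.
  move=> xi /(svp_violation_cases T_gt0 (ltW aT_gt0) (ltW δ_gt0)).
  by rewrite /= -/s -/r => -[] ->; rewrite ?orbT.
rewrite !big_cons big_nil addr0; lra.
Unshelve. all: end_near. Qed.

End svp.

Local Open Scope classical_set_scope.

Theorem mainTheorem6 (R : realType) (d n : nat) (hd : (2 <= d)%N)
    (X : set 'rV[R]_n) (hX : compact X)
    (ell : 'rV[R]_n -> 'I_d -> R)
    (hell : forall i, {within X, continuous (fun x => ell x i)})
    (a : nat -> R) (ha_pos : forall T, (0 < T)%N -> 0 < a T)
    (ha_inf : a @ \oo --> +oo)
    (ha_sub : (fun T => a T / T%:R) @ \oo --> 0) :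
  forall x, X x -> forall P : 'I_d -> R, simplex_int P ->
    (limn_esup (fun T : nat =>
       (elog (iid_prob P (fun xi : {ffun 'I_T -> 'I_d} =>
                 svp a ell x (@empirical R d T xi) T < cost ell x P)%R)
        * ((a T)^-1)%:E)%E) <= (-1)%:E)%E.
Proof.
move=> x _ P [P_gt0 P_sum1]; have P_ge0 i : 0 <= P i := ltW (P_gt0 i).
apply/lee_addgt0Pr => e e_gt0; set ε := e / (e + 2).
have ε_01 : 0 < ε < 1 by rewrite divr_gt0 ?ltr_pdivrMr /=; lra.
have ε_le : ε <= e by rewrite ler_pdivrMr; nra.
have p_le := near_iid_prob_svp_violation_le ell x P_ge0 P_sum1 P_gt0 ha_pos ha_sub ε_01.
apply: le_trans (limn_esup_elog_le _ ha_inf p_le) _ => //.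
by rewrite -EFinD lee_fin; lra.
Qed.
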